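(* Let $a\in(0,1)$ and let $(\mu_n)_{n\in\mathbb{N}}$ be mutation probabilities with $n\mu_n\to\theta\in[0,\infty)$. There is a constant $c>0$ such that for all integers $r\ge2$ and $j\in\{1,2\}$, $$\sup_{n}\mathbb{P}\big[n^{-1}B^{n,\mu_n}>a\,\big|\,\xi^{\mu_n}=r,\Xi_j^{\mu_n}\big]\le\sup_{n}\mathbb{P}\big[n^{-1}\hat B^{n,\mu_n}>a\,\big|\,\xi^{\mu_n}=r,\Xi_j^{\mu_n}\big]\le c\,r^{-2},$$ where the suprema are over those $n$ for which the conditioning event has positive probability.
   Context: Basic model with a fixed site $i$, on the Yule tree. $\mathcal{T}=\bigcup_{l\ge0}\{0,1\}^l$ (binary words; $\emptyset$ the initial cell; $x\prec y$ iff $x$ is a proper prefix of $y$; $x\preceq y$ iff $x\prec y$ or $x=y$). Lifetimes $(A_x)$ i.i.d. Exp(1); $\mathcal{T}_t=\{x:\sum_{y\prec x}A_y\le t<\sum_{y\preceq x}A_y\}$; $\sigma_r=\min\{t:|\mathcal{T}_t|=r\}$. Nucleotides at site $i$: $V(\emptyset)=u_i$; given $V(x)=v$, each daughter $xj$ independently has $V(xj)=\psi$ with probability $\mu/3$ for each $\psi\in\{A,C,G,T\}\setminus\{v\}$ and $V(xj)=v$ with probability $1-\mu$, independently across divisions. $B^{r,\mu}=|\{x\in\mathcal{T}_{\sigma_r}:V(x)\ne u_i\}|$; $\hat B^{r,\mu}=|\{y\in\mathcal{T}_{\sigma_r}:\exists x\preceq y,\ V(x)\ne u_i\}|$. $\xi^\mu=\min\{r:B^{r,\mu}>0\}$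 and $\Xi_j^\mu=\{B^{\xi^\mu,\mu}=j\}$. *)

From Stdlib Require Import Bool Reals List Arith Lra.
Import ListNotations.
Open Scope R_scope.
Open Scope bool_scope.

Inductive nuc := NA | NC | NG | NT.

Definition nuc_eq_dec (x y : nuc) : {x = y} + {x <> y}.
Proof. decide equality. Defined.

Definition all_nucs : list nuc := [NA; NC; NG; NT].

(** A living cell of the Yule tree: its binary word x, and the nucleotides
    V(y) of all y with y ⪯ x, listed from x (head) back to the root. *)
Record cell := mkCell { word : list bool; anc : list nuc }.

(** V(x) (the default is never used: [anc] is never empty). *)
Definition Vc (u : nuc) (c : cell) : nuc := hd u (anc c).

(** State of the process at a jump time σ_r : the cells of T_{σ_r}. *)
Definition state := list cell.

Definition qmut (mu : R) (v w : nuc) : R :=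
  if nuc_eq_dec v w then 1 - mu else mu / 3.

Definition daughters (c : cell) (v0 v1 : nuc) : list cell :=
  [mkCell (word c ++ [false]) (v0 :: anc c);
   mkCell (word c ++ [true])  (v1 :: anc c)].

Definition divide (s : state) (i : nat) (v0 v1 : nuc) : state :=
  firstn i s ++ daughters (nth i s (mkCell [] [])) v0 v1 ++ skipn (S i) s.

Definition init_cell (u : nuc) : cell := mkCell [] [u].

(** Exact law of the trajectory (T_{σ_1}, ..., T_{σ_(m+1)}) with the
    nucleotides, as a finite list of (probability weight, trajectory),
    trajectories stored most recent state first.  At each jump time of the
    Yule process (i.i.d. Exp(1) lifetimes) the dividing cell is uniform among
    the current cells (memorylessness), and each daughter mutates
    independently. *)
Definition step (mu : R) (u : nuc) (d : list (R * list state))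
  : list (R * list state) :=
  flat_map (fun p : R * list state =>
    let (w, tr) := p in
    match tr with
    | [] => []
    | s :: _ =>
      flat_map (fun i =>
        let v := Vc u (nth i s (mkCell [] [])) in
        flat_map (fun v0 =>
          map (fun v1 =>
            (w * / INR (length s) * qmut mu v v0 * qmut mu v v1,
             divide s i v0 v1 :: tr))
          all_nucs) all_nucs) (seq 0 (length s))
    end) d.

Fixpoint dist (mu : R) (u : nuc) (m : nat) : list (R * list state) :=
  match m with
  | O => [(1, [[init_cell u]])]
  | S m' => step mu u (dist mu u m')
  end.

(** T_{σ_k} inside a trajectory of length N (1 <= k <= N). *)
Definition state_at (tr : list state) (k : nat) : state :=
  nth (length tr - k) tr [].

Definition Bcount (u : nuc) (s : state) : nat :=
  length (filter (fun c => if nuc_eq_dec (Vc u c) u then false else true) s).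

Definition Bhat (u : nuc) (s : state) : nat :=
  length (filter (fun c =>
    existsb (fun v => if nuc_eq_dec v u then false else true) (anc c)) s).

Definition Prob (mu : R) (u : nuc) (N : nat) (E : list state -> bool) : R :=
  fold_right (fun (p : R * list state) (acc : R) => let (w, tr) := p in if E tr then w + acc else acc)
    0 (dist mu u (N - 1)).

Definition condProb (mu : R) (u : nuc) (N : nat)
  (E F : list state -> bool) : R :=
  Prob mu u N (fun tr => E tr && F tr) / Prob mu u N F.

(** The event {ξ^μ = r} ∩ Ξ_j (needs the trajectory up to σ_r). *)
Definition xi_Xi (u : nuc) (r j : nat) (tr : list state) : bool :=
  forallb (fun k => Nat.eqb (Bcount u (state_at tr k)) 0) (seq 1 (r - 1))
  && Nat.eqb (Bcount u (state_at tr r)) j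
  && Nat.ltb 0 j.

Definition B_gt (u : nuc) (n : nat) (a : R) (tr : list state) : bool :=
  if Rlt_dec a (INR (Bcount u (state_at tr n)) / INR n) then true else false.

Definition Bhat_gt (u : nuc) (n : nat) (a : R) (tr : list state) : bool :=
  if Rlt_dec a (INR (Bhat u (state_at tr n)) / INR n) then true else false.

(* Call a cell marked if some ancestor (itself included) carries a mutation,
   so that B-hat counts marked cells.  Until sigma_xi every mark is a mutation
   visible at that time, so on {xi = r} inter Xi_j we have B-hat = B = j <= 2
   at time sigma_r.  With M marked cells among k, a division raises M by one
   if the dividing cell is marked (probability M/k) and by the number of mutant
   daughters otherwise, so the potential Z(x) = x^2 + x + 1 satisfies
     E[Z(B-hat at sigma_(k+1))] <= (1 + 2/k) (1 + 6 mu) Z(M).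
   Iterating from r to n gives E[Z(B-hat_n); xi = r, Xi_j] <= 7 P(xi = r, Xi_j)
   n(n+1)/(r(r+1)) exp(6 n mu_n), and Markov's inequality with Z(x) >= x^2
   yields the bound c / r^2, where c = 14 exp(6K) / a^2 and K bounds n mu_n.
   For n < r, B-hat_n vanishes on the event; and B <= B-hat pointwise. *)

From Pilot Require Import Defs.
From Stdlib Require Import Reals List Lia Psatz Bool.
Import ListNotations.
Open Scope R_scope.

Local Notation dummy_cell := (mkCell [] []).

Fixpoint sumR {A} (l : list A) (f : A -> R) : R :=
  match l with [] => 0 | x :: l' => f x + sumR l' f end.

Lemma sumR_app {A} (l1 l2 : list A) f : sumR (l1 ++ l2) f = sumR l1 f + sumR l2 f.
Proof. induction l1 as [|x l1 IH]; simpl; [ring | rewrite IH; ring]. Qed.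

Lemma sumR_flat_map {A B} (l : list A) (g : A -> list B) f :
  sumR (flat_map g l) f = sumR l (fun x => sumR (g x) f).
Proof. induction l as [|x l IH]; simpl; [ring | rewrite sumR_app, IH; ring]. Qed.

Lemma sumR_map {A B} (l : list A) (g : A -> B) f : sumR (map g l) f = sumR l (fun x => f (g x)).
Proof. induction l as [|x l IH]; simpl; [ring | rewrite IH; ring]. Qed.

Lemma sumR_ext_in {A} (l : list A) f g :
  (forall x, In x l -> f x = g x) -> sumR l f = sumR l g.
Proof.
  induction l as [|x l IH]; simpl; intros H; [ring|].
  rewrite H, IH; auto.
Qed.

Lemma sumR_le_in {A} (l : list A) f g :
  (forall x, In x l -> f x <= g x) -> sumR l f <= sumR l g.
Proof.
  induction l as [|x l IH]; simpl; intros H; [lra|].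
  apply Rplus_le_compat; auto.
Qed.

Lemma sumR_scal {A} (l : list A) c f : sumR l (fun x => c * f x) = c * sumR l f.
Proof. induction l as [|x l IH]; simpl; [ring | rewrite IH; ring]. Qed.

Lemma sumR_const {A} (l : list A) c : sumR l (fun _ => c) = INR (length l) * c.
Proof.
  induction l as [|x l IH]; cbn [sumR length]; [simpl; ring|].
  rewrite IH, S_INR; ring.
Qed.

Lemma sumR_nth_seq {A} (s : list A) d (h : A -> R) :
  sumR (seq 0 (length s)) (fun i => h (nth i s d)) = sumR s h.
Proof.
  induction s as [|x s IH]; simpl; auto.
  f_equal. rewrite <- seq_shift, sumR_map. exact IH.
Qed.

Lemma sumR_bool {A} (p : A -> bool) (l : list A) (f : bool -> R) :
  sumR l (fun c => f (p c)) =
  INR (length (filter p l)) * f true + (INR (length l) - INR (length (filter p l))) * f false.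
Proof.
  induction l as [|c l IH]; cbn [sumR filter length]; [simpl; ring|].
  rewrite IH. destruct (p c); cbn [length]; rewrite ?S_INR; ring.
Qed.

Lemma Rdiv_le_of_le_mult a b c : 0 < b -> a <= c * b -> a / b <= c.
Proof.
  intros Hb H. unfold Rdiv. apply (Rmult_le_reg_r b); [exact Hb|].
  rewrite Rmult_assoc, Rinv_l, Rmult_1_r by lra. exact H.
Qed.

Lemma pow_one_plus_le_exp x d : 0 <= x -> (1 + x) ^ d <= exp (INR d * x).
Proof.
  intros Hx. induction d as [|d IH]; simpl pow.
  - rewrite Rmult_0_l, exp_0. lra.
  - rewrite S_INR. replace ((INR d + 1) * x) with (x + INR d * x) by ring.
    rewrite exp_plus.
    apply Rmult_le_compat; [lra | apply pow_le; lra | apply exp_ineq1_le | exact IH].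
Qed.

Lemma exp_le_exp x y : x <= y -> exp x <= exp y.
Proof. intros [H | ->]; [left; apply exp_increasing, H | right; reflexivity]. Qed.

Lemma growth_over_square_le (n r : R) : 1 <= n -> 1 <= r ->
  / n ^ 2 * (n * (n + 1) / (r * (r + 1))) <= 2 / r ^ 2.
Proof.
  intros Hn Hr.
  replace (/ n ^ 2 * (n * (n + 1) / (r * (r + 1)))) with ((1 + / n) * / (r * (r + 1)))
    by (field; lra).
  replace (2 / r ^ 2) with (2 * / (r * r)) by (field; lra).
  assert (/ n <= 1) by (rewrite <- Rinv_1; apply Rinv_le_contravar; lra).
  apply Rmult_le_compat.
  - assert (0 < / n) by (apply Rinv_0_lt_compat; lra). lra.
  - left; apply Rinv_0_lt_compat; nra.
  - lra.
  - apply Rinv_le_contravar; nra.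
Qed.

Definition b2R (b : bool) : R := if b then 1 else 0.

Definition expect (d : list (R * list state)) (g : list state -> R) : R :=
  sumR d (fun p => fst p * g (snd p)).

Lemma Prob_expect mu u N E :
  Prob mu u N E = expect (Defs.dist mu u (N - 1)) (fun tr => b2R (E tr)).
Proof.
  unfold Prob, expect.
  induction (Defs.dist mu u (N - 1)) as [|[w tr] d IH]; simpl; [ring|].
  rewrite IH. destruct (E tr); simpl; ring.
Qed.

Lemma expect_scal d c g : expect d (fun tr => c * g tr) = c * expect d g.
Proof.
  unfold expect. rewrite <- sumR_scal. apply sumR_ext_in. intros; ring.
Qed.

Definition transition (mu : R) (u : nuc) (g : list state -> R) (tr : list state) : R :=
  match tr with
  | [] => 0
  | s :: _ =>
    sumR (seq 0 (length s)) (fun i =>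
      sumR all_nucs (fun v0 => sumR all_nucs (fun v1 =>
        / INR (length s) * (qmut mu (Vc u (nth i s dummy_cell)) v0 *
          qmut mu (Vc u (nth i s dummy_cell)) v1 * g (divide s i v0 v1 :: tr)))))
  end.

Lemma expect_step mu u d g : expect (step mu u d) g = expect d (transition mu u g).
Proof.
  unfold expect, step. rewrite sumR_flat_map. apply sumR_ext_in. intros [w tr] _.
  destruct tr as [|s tr]; cbn [fst snd transition]; [simpl; ring|].
  rewrite sumR_flat_map, <- sumR_scal. apply sumR_ext_in; intros i _.
  rewrite sumR_flat_map, <- sumR_scal. apply sumR_ext_in; intros v0 _.
  rewrite sumR_map, <- sumR_scal. apply sumR_ext_in; intros v1 _.
  cbn [fst snd]. ring.
Qed.

Inductive reachable (u : nuc) : list state -> Prop :=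
| reachable_init : reachable u [[init_cell u]]
| reachable_divide s tr i v0 v1 :
    reachable u (s :: tr) -> (i < length s)%nat ->
    reachable u (divide s i v0 v1 :: s :: tr).

Lemma length_divide s i v0 v1 :
  (i < length s)%nat -> length (divide s i v0 v1) = S (length s).
Proof.
  intros H. unfold divide. rewrite !length_app, length_firstn, length_skipn.
  cbn [length daughters]. lia.
Qed.

Lemma reachable_length u s tr : reachable u (s :: tr) -> length s = length (s :: tr).
Proof.
  intros H. remember (s :: tr) as l eqn:E. revert s tr E.
  induction H as [|s tr i v0 v1 H IH Hi]; intros s' tr' E; injection E as <- <-; [reflexivity|].
  rewrite length_divide, (IH s tr eq_refl) by exact Hi. reflexivity.
Qed.

Lemma qmut_nonneg mu v w : 0 <= mu <= 1 -> 0 <= qmut mu v w.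
Proof. intros. unfold qmut. destruct nuc_eq_dec; lra. Qed.

Lemma dist_support mu u m w tr : 0 <= mu <= 1 -> In (w, tr) (Defs.dist mu u m) ->
  0 <= w /\ reachable u tr /\ length tr = S m.
Proof.
  intros Hmu. revert w tr. induction m as [|m IH]; intros w tr H.
  - destruct H as [H | []]. injection H as <- <-. repeat split; [lra | constructor].
  - apply in_flat_map in H as [[w' [|s tr']] [Hin H]]; [destruct H|].
    destruct (IH _ _ Hin) as (Hw & Hr & Hl).
    apply in_flat_map in H as [i [Hi H]]. apply in_seq in Hi.
    apply in_flat_map in H as [v0 [_ H]].
    apply in_map_iff in H as [v1 [E _]]. injection E as <- <-.
    assert (0 < INR (length s)) by (apply lt_0_INR; lia).
    repeat split.
    + repeat apply Rmult_le_pos; auto using qmut_nonneg.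
      left; apply Rinv_0_lt_compat; assumption.
    + constructor; [assumption | lia].
    + simpl in *. lia.
Qed.

Lemma expect_dist_le mu u m f g : 0 <= mu <= 1 ->
  (forall tr, reachable u tr -> length tr = S m -> f tr <= g tr) ->
  expect (Defs.dist mu u m) f <= expect (Defs.dist mu u m) g.
Proof.
  intros Hmu H. apply sumR_le_in. intros [w tr] Hin.
  destruct (dist_support mu u m w tr Hmu Hin) as (Hw & Hr & Hl).
  apply Rmult_le_compat_l; auto.
Qed.

Lemma expect_zero d : expect d (fun _ => 0) = 0.
Proof.
  unfold expect. rewrite (sumR_ext_in _ _ (fun _ => 0)) by (intros; ring).
  rewrite sumR_const. ring.
Qed.

Lemma expect_dist_nonneg mu u m f : 0 <= mu <= 1 -> (forall tr, 0 <= f tr) ->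
  0 <= expect (Defs.dist mu u m) f.
Proof.
  intros Hmu Hf. rewrite <- (expect_zero (Defs.dist mu u m)). apply expect_dist_le; auto.
Qed.

Lemma expect_dist_ext mu u m f g : 0 <= mu <= 1 ->
  (forall tr, reachable u tr -> length tr = S m -> f tr = g tr) ->
  expect (Defs.dist mu u m) f = expect (Defs.dist mu u m) g.
Proof.
  intros Hmu H. apply Rle_antisym; apply expect_dist_le; auto;
    intros tr Hr Hl; rewrite H; auto; lra.
Qed.

Lemma expect_dist_succ mu u N g : (1 <= N)%nat ->
  expect (Defs.dist mu u (S N - 1)) g = expect (Defs.dist mu u (N - 1)) (transition mu u g).
Proof.
  intros HN. replace (S N - 1)%nat with (S (N - 1)) by lia. apply expect_step.
Qed.

Lemma Prob_nonneg mu u N E : 0 <= mu <= 1 -> 0 <= Prob mu u N E.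
Proof.
  intros Hmu. rewrite Prob_expect. apply expect_dist_nonneg; [exact Hmu|].
  intros tr. destruct (E tr); simpl; lra.
Qed.

Definition mutated (u v : nuc) : bool := if nuc_eq_dec v u then false else true.
Definition marked (u : nuc) (c : cell) : bool := existsb (mutated u) (anc c).
Definition mutant (u : nuc) (c : cell) : bool := mutated u (Vc u c).

Lemma Bhat_filter u s : Bhat u s = length (filter (marked u) s).
Proof. reflexivity. Qed.

Lemma Bcount_filter u s : Bcount u s = length (filter (mutant u) s).
Proof. reflexivity. Qed.

Lemma marked_daughter u c w v : marked u (mkCell w (v :: anc c)) = mutated u v || marked u c.
Proof. reflexivity. Qed.

Lemma mutant_daughter u w v l : mutant u (mkCell w (v :: l)) = mutated u v.
Proof. reflexivity. Qed.

Lemma mutant_marked u c : mutant u c = true -> marked u c = true.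
Proof.
  destruct c as [w [|v l]]; unfold mutant, marked, Vc, mutated; simpl.
  - destruct nuc_eq_dec; congruence.
  - intros ->. reflexivity.
Qed.

Lemma unmarked_Vc u c : marked u c = false -> Vc u c = u.
Proof.
  destruct c as [w [|v l]]; unfold marked, Vc, mutated; simpl; [reflexivity|].
  intros H. apply orb_false_iff in H as [H _]. destruct nuc_eq_dec; congruence.
Qed.

Lemma filter_length_mono {A} (p q : A -> bool) l :
  (forall x, p x = true -> q x = true) -> (length (filter p l) <= length (filter q l))%nat.
Proof.
  intros H; induction l as [|x l IH]; simpl; [lia|].
  destruct (p x) eqn:E; [rewrite (H x E) | destruct (q x)]; simpl; lia.
Qed.

Lemma Bcount_le_Bhat u s : (Bcount u s <= Bhat u s)%nat.
Proof. apply filter_length_mono, mutant_marked. Qed.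

Lemma Bhat_le_length u s : (Bhat u s <= length s)%nat.
Proof. apply filter_length_le. Qed.

Lemma Bhat0_unmarked u s c : Bhat u s = 0%nat -> In c s -> marked u c = false.
Proof.
  rewrite Bhat_filter. intros H Hc. apply length_zero_iff_nil in H.
  destruct (marked u c) eqn:E; [|reflexivity].
  assert (Hin : In c (filter (marked u) s)) by (apply filter_In; auto).
  rewrite H in Hin. destruct Hin.
Qed.

Lemma count_divide (p : cell -> bool) s i v0 v1 : (i < length s)%nat ->
  (length (filter p (divide s i v0 v1)) + Nat.b2n (p (nth i s dummy_cell)) =
   length (filter p s) + length (filter p (daughters (nth i s dummy_cell) v0 v1)))%nat.
Proof.
  intros H.
  assert (Hs : length (filter p s) = (length (filter p (firstn i s))
     + Nat.b2n (p (nth i s dummy_cell)) + length (filter p (skipn (S i) s)))%nat).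
  { rewrite <- (firstn_skipn_middle i s (nth_error_nth' s dummy_cell H)) at 1.
    rewrite filter_app, length_app. simpl. destruct p; simpl; lia. }
  rewrite Hs. unfold divide. rewrite !filter_app, !length_app. lia.
Qed.

(* Without prior marks, the only marks are fresh mutations, i.e. mutant daughters. *)
Lemma Bhat_divide_unmarked u s i v0 v1 : Bhat u s = 0%nat -> (i < length s)%nat ->
  Bhat u (divide s i v0 v1) = Bcount u (divide s i v0 v1).
Proof.
  intros H0 Hi. set (c := nth i s dummy_cell).
  assert (Hc : marked u c = false) by (apply (Bhat0_unmarked u s); [|apply nth_In]; auto).
  assert (Hc' : mutant u c = false).
  { destruct (mutant u c) eqn:E; [apply mutant_marked in E; congruence | reflexivity]. }
  assert (Hd : filter (marked u) (daughters c v0 v1) = filter (mutant u) (daughters c v0 v1)).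
  { apply filter_ext_in. intros x [<- | [<- | []]];
      rewrite marked_daughter, mutant_daughter, Hc, orb_false_r; reflexivity. }
  pose proof (count_divide (marked u) s i v0 v1 Hi) as Em.
  pose proof (count_divide (mutant u) s i v0 v1 Hi) as Eu.
  pose proof (Bcount_le_Bhat u s) as Hle.
  fold c in Em, Eu. rewrite Hc, Hd in Em. rewrite Hc' in Eu.
  rewrite Bhat_filter, Bcount_filter in *. simpl in Em, Eu. lia.
Qed.

Lemma state_at_cons s tr k : (k <= length tr)%nat -> state_at (s :: tr) k = state_at tr k.
Proof.
  intros H. unfold state_at. cbn [length].
  replace (S (length tr) - k)%nat with (S (length tr - k)) by lia. reflexivity.
Qed.

Lemma state_at_length tr : state_at tr (length tr) = hd [] tr.
Proof. unfold state_at. rewrite Nat.sub_diag. destruct tr; reflexivity. Qed.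

Lemma Bhat_init u : Bhat u [init_cell u] = 0%nat.
Proof. unfold Bhat, init_cell. simpl. destruct (nuc_eq_dec u u); [reflexivity | congruence]. Qed.

Lemma Bhat_before_mutation u tr k : reachable u tr -> (1 <= k <= length tr)%nat ->
  (forall k', (1 <= k' <= k)%nat -> Bcount u (state_at tr k') = 0%nat) ->
  Bhat u (state_at tr k) = 0%nat.
Proof.
  intros Hr. revert k. induction Hr as [|s tr i v0 v1 Hr IH Hi]; intros k Hk Hz.
  - simpl in Hk. replace k with 1%nat by lia. apply Bhat_init.
  - assert (Hprev : forall k', (1 <= k' <= length (s :: tr))%nat -> (k' <= k)%nat ->
              Bhat u (state_at (s :: tr) k') = 0%nat).
    { intros k' Hk' Hle. apply IH; [lia|]. intros k'' Hk''.
      rewrite <- (state_at_cons (divide s i v0 v1)) by lia. apply Hz; lia. }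
    destruct (Nat.le_gt_cases k (length (s :: tr))) as [Hle | Hgt].
    + rewrite state_at_cons by exact Hle. apply Hprev; lia.
    + cbn [length] in Hk, Hgt.
      replace k with (length (divide s i v0 v1 :: s :: tr)) in * by (simpl; lia).
      assert (Hs : Bhat u s = 0%nat).
      { change (Bhat u (hd [] (s :: tr)) = 0%nat). rewrite <- state_at_length.
        apply Hprev; simpl; lia. }
      rewrite state_at_length. simpl hd. rewrite Bhat_divide_unmarked by assumption.
      change (Bcount u (hd [] (divide s i v0 v1 :: s :: tr)) = 0%nat).
      rewrite <- state_at_length. apply Hz. lia.
Qed.

Lemma forallb_ext_in {A} (f g : A -> bool) l :
  (forall x, In x l -> f x = g x) -> forallb f l = forallb g l.
Proof. induction l as [|x l IH]; simpl; intros H; [reflexivity | rewrite H, IH; auto]. Qed.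

Lemma xi_Xi_cons u r j s tr : (r <= length tr)%nat -> xi_Xi u r j (s :: tr) = xi_Xi u r j tr.
Proof.
  intros H. unfold xi_Xi. rewrite state_at_cons by exact H. do 2 f_equal.
  apply forallb_ext_in. intros k Hk. apply in_seq in Hk.
  rewrite state_at_cons by lia. reflexivity.
Qed.

Lemma xi_Xi_spec u r j tr : xi_Xi u r j tr = true ->
  (forall k, (1 <= k <= r - 1)%nat -> Bcount u (state_at tr k) = 0%nat) /\
  Bcount u (state_at tr r) = j.
Proof.
  unfold xi_Xi. intros H. apply andb_true_iff in H as [H _]. apply andb_true_iff in H as [H1 H2].
  split.
  - intros k Hk. rewrite forallb_forall in H1. apply Nat.eqb_eq, H1, in_seq. lia.
  - apply Nat.eqb_eq, H2.
Qed.

Lemma Bhat_before_xi u r j tr n : reachable u tr -> length tr = r -> (1 <= n < r)%nat ->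
  xi_Xi u r j tr = true -> Bhat u (state_at tr n) = 0%nat.
Proof.
  intros Hr Hl Hn Hx. destruct (xi_Xi_spec _ _ _ _ Hx) as [H0 _].
  apply Bhat_before_mutation; [assumption | lia |]. intros; apply H0; lia.
Qed.

Lemma Bhat_at_xi u r j tr : reachable u tr -> length tr = r -> (2 <= r)%nat ->
  xi_Xi u r j tr = true -> Bhat u (hd [] tr) = j.
Proof.
  intros Hr Hl H2 Hx. destruct (xi_Xi_spec _ _ _ _ Hx) as [H0 Hj].
  destruct Hr as [|s tr i v0 v1 Hr Hi]; [simpl in Hl; lia|]. simpl hd.
  assert (Hs : Bhat u (state_at (divide s i v0 v1 :: s :: tr) (r - 1)) = 0%nat)
    by (apply (Bhat_before_xi u r j); auto using reachable_divide; lia).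
  rewrite state_at_cons, <- Hl, state_at_length in Hs by (simpl in *; lia).
  rewrite Bhat_divide_unmarked by assumption. rewrite <- Hj, <- Hl, state_at_length. reflexivity.
Qed.

(* The constant term makes the potential dominate the drift 4 mu + 2 mu^2 that
   mutations create when no cell is marked yet. *)
Definition potential (x : R) : R := x * x + x + 1.

Lemma potential_pos x : 0 <= x -> 0 < potential x.
Proof. unfold potential; nra. Qed.

(* Mean of Z(B-hat) after a division, averaged over the daughters' nucleotides:
   a marked cell adds one mark, an unmarked one a mark per mutant daughter. *)
Definition offspring_potential (mu M : R) (is_marked : bool) : R :=
  if is_marked then potential (M + 1)
  else (1 - mu) ^ 2 * potential M + 2 * mu * (1 - mu) * potential (M + 1)
       + mu ^ 2 * potential (M + 2).

Lemma INR_Bhat_divide u s i v0 v1 : (i < length s)%nat ->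
  INR (Bhat u (divide s i v0 v1)) = INR (Bhat u s) - b2R (marked u (nth i s dummy_cell))
    + b2R (mutated u v0 || marked u (nth i s dummy_cell))
    + b2R (mutated u v1 || marked u (nth i s dummy_cell)).
Proof.
  intros H. pose proof (count_divide (marked u) s i v0 v1 H) as E.
  rewrite !Bhat_filter. apply (f_equal INR) in E. cbn [daughters filter] in E.
  rewrite !marked_daughter in E.
  destruct (marked u (nth i s dummy_cell)), (mutated u v0), (mutated u v1);
    simpl in E |- *; rewrite ?plus_INR, ?S_INR in E; simpl in E; lra.
Qed.

Lemma mean_potential_divide mu u s i : (i < length s)%nat ->
  sumR all_nucs (fun v0 => sumR all_nucs (fun v1 =>
    qmut mu (Vc u (nth i s dummy_cell)) v0 * qmut mu (Vc u (nth i s dummy_cell)) v1 *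
    potential (INR (Bhat u (divide s i v0 v1))))) =
  offspring_potential mu (INR (Bhat u s)) (marked u (nth i s dummy_cell)).
Proof.
  intros H.
  erewrite sumR_ext_in; [| intros v0 _; erewrite sumR_ext_in; [reflexivity|]; intros v1 _;
    rewrite INR_Bhat_divide by exact H; reflexivity].
  unfold offspring_potential. destruct (marked u (nth i s dummy_cell)) eqn:Hm.
  - destruct (Vc u (nth i s dummy_cell)), u; unfold qmut, mutated, b2R, potential; simpl; field.
  - rewrite (unmarked_Vc u _ Hm).
    destruct u; unfold qmut, mutated, b2R, potential; simpl; field.
Qed.

Lemma potential_drift_le (k M mu : R) : 1 <= k -> 0 <= M <= k -> 0 <= mu <= 1 ->
  / k * (M * offspring_potential mu M true + (k - M) * offspring_potential mu M false)
  <= (1 + 2 / k) * (1 + 6 * mu) * potential M.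
Proof.
  intros Hk HM Hmu. unfold offspring_potential.
  replace (M * potential (M + 1) + (k - M) * ((1 - mu) ^ 2 * potential M
             + 2 * mu * (1 - mu) * potential (M + 1) + mu ^ 2 * potential (M + 2)))
    with (k * potential M + 2 * M * (M + 1) + (k - M) * (4 * mu * (M + 1) + 2 * mu ^ 2))
    by (unfold potential; ring).
  replace ((1 + 2 / k) * (1 + 6 * mu) * potential M)
    with (/ k * ((k + 2) * (1 + 6 * mu) * potential M)) by (field; lra).
  apply Rmult_le_compat_l; [left; apply Rinv_0_lt_compat; lra|].
  unfold potential.
  assert (0 <= (k - M) * (mu * (4 * M + 6) - (4 * mu * (M + 1) + 2 * mu ^ 2)))
    by (apply Rmult_le_pos; nra).
  assert (k * mu * (4 * M + 6) <= 6 * mu * k * (M * M + M + 1)).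
  { replace (6 * mu * k * (M * M + M + 1)) with (k * mu * (6 * (M * M + M + 1))) by ring.
    apply Rmult_le_compat_l; nra. }
  assert ((k - M) * mu * (4 * M + 6) <= k * mu * (4 * M + 6)) by nra.
  nra.
Qed.

Lemma transition_ext mu u g h (s : state) (tr : list state) :
  (forall i v0 v1, (i < length s)%nat ->
     g (divide s i v0 v1 :: s :: tr) = h (divide s i v0 v1 :: s :: tr)) ->
  transition mu u g (s :: tr) = transition mu u h (s :: tr).
Proof.
  intros H. unfold transition. apply sumR_ext_in. intros i Hi. apply in_seq in Hi.
  apply sumR_ext_in; intros v0 _. apply sumR_ext_in; intros v1 _. rewrite H by lia. reflexivity.
Qed.

Lemma transition_const mu u c (s : state) (tr : list state) : (0 < length s)%nat ->
  transition mu u (fun _ => c) (s :: tr) = c.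
Proof.
  intros Hs. unfold transition.
  assert (Hk : 0 < INR (length s)) by (apply lt_0_INR; exact Hs).
  rewrite (sumR_ext_in _ _ (fun _ => / INR (length s) * c)).
  - rewrite sumR_const, length_seq. field. lra.
  - intros i _. destruct (Vc u (nth i s dummy_cell)); unfold qmut; simpl; field; lra.
Qed.

Lemma transition_potential_Bhat_le mu u (s : state) (tr : list state) :
  0 <= mu <= 1 -> (0 < length s)%nat ->
  transition mu u (fun tr' => potential (INR (Bhat u (hd [] tr')))) (s :: tr)
  <= (1 + 2 / INR (length s)) * (1 + 6 * mu) * potential (INR (Bhat u s)).
Proof.
  intros Hmu Hs. unfold transition.
  rewrite (sumR_ext_in _ _ (fun i => / INR (length s) *
             offspring_potential mu (INR (Bhat u s)) (marked u (nth i s dummy_cell)))).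
  - rewrite sumR_scal.
    rewrite (sumR_nth_seq s dummy_cell (fun c => offspring_potential mu _ (marked u c))).
    rewrite sumR_bool, <- Bhat_filter.
    apply potential_drift_le; [|split|]; auto using pos_INR, le_INR, Bhat_le_length.
    apply (le_INR 1); exact Hs.
  - intros i Hi. apply in_seq in Hi. rewrite <- mean_potential_divide by lia.
    rewrite <- sumR_scal. apply sumR_ext_in; intros v0 _.
    rewrite <- sumR_scal. apply sumR_ext_in; intros v1 _. reflexivity.
Qed.

Definition potential_on (u : nuc) (r j : nat) (tr : list state) : R :=
  if xi_Xi u r j tr then potential (INR (Bhat u (hd [] tr))) else 0.

Lemma potential_on_nonneg u r j tr : 0 <= potential_on u r j tr.
Proof. unfold potential_on. destruct xi_Xi; [left; apply potential_pos, pos_INR | lra]. Qed.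

Lemma transition_potential_on_le mu u r j (s : state) (tr : list state) :
  0 <= mu <= 1 -> (0 < length s)%nat -> (r <= length (s :: tr))%nat ->
  transition mu u (potential_on u r j) (s :: tr)
  <= (1 + 2 / INR (length s)) * (1 + 6 * mu) * potential_on u r j (s :: tr).
Proof.
  intros Hmu Hs Hr. unfold potential_on at 2. destruct (xi_Xi u r j (s :: tr)) eqn:Hx.
  - rewrite (transition_ext _ _ _ (fun tr' => potential (INR (Bhat u (hd [] tr'))))).
    + apply transition_potential_Bhat_le; assumption.
    + intros i v0 v1 _. unfold potential_on. rewrite xi_Xi_cons, Hx by exact Hr. reflexivity.
  - rewrite (transition_ext _ _ _ (fun _ => 0)).
    + rewrite transition_const by exact Hs. lra.
    + intros i v0 v1 _. unfold potential_on. rewrite xi_Xi_cons, Hx by exact Hr. reflexivity.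
Qed.

Definition moment (mu : R) (u : nuc) (r j N : nat) : R :=
  expect (Defs.dist mu u (N - 1)) (potential_on u r j).

Lemma moment_nonneg mu u r j N : 0 <= mu <= 1 -> 0 <= moment mu u r j N.
Proof. intros Hmu. apply expect_dist_nonneg; auto using potential_on_nonneg. Qed.

Lemma moment_succ mu u r j N : 0 <= mu <= 1 -> (1 <= N)%nat -> (r <= N)%nat ->
  moment mu u r j (S N) <= (1 + 2 / INR N) * (1 + 6 * mu) * moment mu u r j N.
Proof.
  intros Hmu HN Hr. unfold moment. rewrite expect_dist_succ, <- expect_scal by exact HN.
  apply expect_dist_le; [exact Hmu|]. intros [|s tr] Hreach Hl; [simpl in Hl; lia|].
  pose proof (reachable_length u s tr Hreach) as Hs. rewrite Hl in Hs.
  replace N with (length s) by lia. apply transition_potential_on_le; [assumption | lia | lia].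
Qed.

Lemma moment_growth mu u r j d : 0 <= mu <= 1 -> (1 <= r)%nat ->
  moment mu u r j (r + d) <= moment mu u r j r *
    (INR (r + d) * INR (r + d + 1) / (INR r * INR (r + 1))) * (1 + 6 * mu) ^ d.
Proof.
  intros Hmu Hr. assert (0 < INR r) by (apply lt_0_INR; lia).
  pose proof (moment_nonneg mu u r j r Hmu).
  induction d as [|d IH].
  - rewrite Nat.add_0_r. simpl pow. right. field. rewrite plus_INR, INR_1. lra.
  - replace (r + S d)%nat with (S (r + d)) by lia.
    eapply Rle_trans; [apply moment_succ; auto; lia|].
    assert (Hrd : 0 < INR (r + d)) by (apply lt_0_INR; lia).
    eapply Rle_trans.
    { apply Rmult_le_compat_l; [|exact IH].
      apply Rmult_le_pos; [|lra].
      apply Rplus_le_le_0_compat; [lra | apply Rlt_le, Rdiv_lt_0_compat; lra]. }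
    right. replace (S (r + d) + 1)%nat with (S (S (r + d))) by lia.
    rewrite !S_INR, !plus_INR, INR_1. simpl pow. field. rewrite plus_INR in Hrd. lra.
Qed.

Lemma moment_at_xi mu u r j : 0 <= mu <= 1 -> (2 <= r)%nat -> (j <= 2)%nat ->
  moment mu u r j r <= 7 * Prob mu u r (xi_Xi u r j).
Proof.
  intros Hmu Hr Hj. unfold moment. rewrite Prob_expect, <- expect_scal.
  apply expect_dist_le; [exact Hmu|]. intros tr Hreach Hl.
  unfold potential_on. destruct (xi_Xi u r j tr) eqn:Hx; simpl b2R; [|lra].
  rewrite (Bhat_at_xi u r j tr) by (auto; lia).
  apply le_INR in Hj. unfold potential. simpl in Hj. pose proof (pos_INR j). nra.
Qed.

Lemma Prob_xi_Xi_stable mu u r j d : 0 <= mu <= 1 -> (1 <= r)%nat ->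
  Prob mu u (r + d) (xi_Xi u r j) = Prob mu u r (xi_Xi u r j).
Proof.
  intros Hmu Hr. induction d as [|d IH]; [rewrite Nat.add_0_r; reflexivity|].
  rewrite <- IH, Nat.add_succ_r, !Prob_expect, expect_dist_succ by lia.
  apply expect_dist_ext; [exact Hmu|]. intros [|s tr] Hreach Hl; [simpl in Hl; lia|].
  rewrite (transition_ext _ _ _ (fun _ => b2R (xi_Xi u r j (s :: tr)))).
  - apply transition_const. rewrite (reachable_length u s tr Hreach). simpl; lia.
  - intros i v0 v1 _. rewrite xi_Xi_cons by (simpl in Hl |- *; lia). reflexivity.
Qed.

Lemma Prob_Bhat_gt_le_moment mu u r j n a : 0 <= mu <= 1 -> 0 < a -> (1 <= n)%nat ->
  Prob mu u n (fun tr => Bhat_gt u n a tr && xi_Xi u r j tr)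
  <= / (a * INR n) ^ 2 * moment mu u r j n.
Proof.
  intros Hmu Ha Hn. assert (HnR : 0 < INR n) by (apply lt_0_INR; lia).
  unfold moment. rewrite Prob_expect, <- expect_scal.
  apply expect_dist_le; [exact Hmu|]. intros tr _ Hl.
  assert (Hinv : 0 < / (a * INR n) ^ 2) by (apply Rinv_0_lt_compat, pow_lt; nra).
  unfold Bhat_gt, potential_on.
  destruct (xi_Xi u r j tr); rewrite ?andb_true_r, ?andb_false_r; simpl b2R;
    [|rewrite Rmult_0_r; lra].
  replace (state_at tr n) with (hd [] tr)
    by (rewrite <- state_at_length; f_equal; lia).
  assert (HB0 : 0 <= INR (Bhat u (hd [] tr))) by apply pos_INR.
  set (B := INR (Bhat u (hd [] tr))) in *.
  destruct Rlt_dec as [HB | _]; simpl b2R;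
    [|apply Rmult_le_pos; [lra | left; apply potential_pos, HB0]].
  assert (HaB : a * INR n < B).
  { apply (Rmult_lt_compat_r (INR n)) in HB; [|exact HnR].
    unfold Rdiv in HB. rewrite Rmult_assoc, Rinv_l, Rmult_1_r in HB; lra. }
  assert (Han : 0 < a * INR n) by nra.
  assert (Hsq : (a * INR n) ^ 2 <= potential B) by (unfold potential; simpl; nra).
  apply (Rmult_le_reg_l ((a * INR n) ^ 2)); [apply pow_lt; nra|].
  rewrite <- Rmult_assoc, Rinv_r, Rmult_1_l, Rmult_1_r by (apply pow_nonzero; nra).
  exact Hsq.
Qed.

Lemma Prob_Bhat_gt_before_xi mu u r j n a : 0 <= mu <= 1 -> 0 <= a -> (1 <= n < r)%nat ->
  Prob mu u r (fun tr => Bhat_gt u n a tr && xi_Xi u r j tr) = 0.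
Proof.
  intros Hmu Ha Hn. rewrite Prob_expect, <- (expect_zero (Defs.dist mu u (r - 1))).
  apply expect_dist_ext; [exact Hmu|]. intros tr Hreach Hl.
  destruct (xi_Xi u r j tr) eqn:Hx; rewrite ?andb_true_r, ?andb_false_r; [|reflexivity].
  unfold Bhat_gt. rewrite (Bhat_before_xi u r j tr n) by (auto; lia).
  destruct Rlt_dec as [H | _]; [|reflexivity].
  unfold Rdiv in H. rewrite Rmult_0_l in H. lra.
Qed.

Lemma Prob_B_gt_le_Bhat_gt mu u N n a F : 0 <= mu <= 1 -> (1 <= n)%nat ->
  Prob mu u N (fun tr => B_gt u n a tr && F tr)
  <= Prob mu u N (fun tr => Bhat_gt u n a tr && F tr).
Proof.
  intros Hmu Hn. rewrite !Prob_expect. apply expect_dist_le; [exact Hmu|]. intros tr _ _.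
  destruct (F tr); rewrite ?andb_true_r, ?andb_false_r; [|simpl; lra].
  unfold B_gt, Bhat_gt.
  destruct Rlt_dec as [H1 | _]; destruct Rlt_dec as [_ | H2]; simpl; try lra.
  exfalso. apply H2. eapply Rlt_le_trans; [exact H1|].
  apply Rmult_le_compat_r; [left; apply Rinv_0_lt_compat, lt_0_INR; lia|].
  apply le_INR, Bcount_le_Bhat.
Qed.

Lemma moment_le mu u r j n K : 0 <= mu <= 1 ->
  (2 <= r)%nat -> (j <= 2)%nat -> (r <= n)%nat -> INR n * mu <= K ->
  moment mu u r j n <= 7 * Prob mu u r (xi_Xi u r j) *
    (INR n * INR (n + 1) / (INR r * INR (r + 1))) * exp (6 * K).
Proof.
  intros Hmu Hr Hj Hrn HK.
  assert (HG : 0 <= INR n * INR (n + 1) / (INR r * INR (r + 1))).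
  { assert (1 <= INR r) by (apply (le_INR 1); lia).
    rewrite !plus_INR, INR_1. pose proof (pos_INR n).
    apply Rmult_le_pos; [nra | left; apply Rinv_0_lt_compat; nra]. }
  replace n with (r + (n - r))%nat at 1 by lia.
  eapply Rle_trans; [apply moment_growth; auto; lia|].
  replace (r + (n - r))%nat with n by lia.
  apply Rmult_le_compat; [| apply pow_le; lra | |].
  - apply Rmult_le_pos; [apply moment_nonneg, Hmu | exact HG].
  - apply Rmult_le_compat_r; [exact HG|]. apply moment_at_xi; auto; lia.
  - eapply Rle_trans; [apply pow_one_plus_le_exp; lra|]. apply exp_le_exp.
    assert (INR (n - r) <= INR n) by (apply le_INR; lia). nra.
Qed.

Lemma Prob_Bhat_gt_xi_le mu u r j n a K : 0 <= mu <= 1 -> 0 < a ->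
  (2 <= r)%nat -> (j <= 2)%nat -> (r <= n)%nat -> INR n * mu <= K ->
  Prob mu u n (fun tr => Bhat_gt u n a tr && xi_Xi u r j tr)
  <= 14 * exp (6 * K) / a ^ 2 / INR r ^ 2 * Prob mu u r (xi_Xi u r j).
Proof.
  intros Hmu Ha Hr Hj Hrn HK.
  assert (HrR : 1 <= INR r) by (apply (le_INR 1); lia).
  assert (HnR : 1 <= INR n) by (apply (le_INR 1); lia).
  pose proof (Prob_nonneg mu u r (xi_Xi u r j) Hmu) as HP.
  pose proof (exp_pos (6 * K)) as HE.
  set (P := Prob mu u r (xi_Xi u r j)) in *.
  set (G := INR n * INR (n + 1) / (INR r * INR (r + 1))).
  eapply Rle_trans; [apply Prob_Bhat_gt_le_moment; auto; lia|].
  apply Rle_trans with (7 * P * exp (6 * K) / a ^ 2 * (/ INR n ^ 2 * G)).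
  { replace (7 * P * exp (6 * K) / a ^ 2 * (/ INR n ^ 2 * G))
      with (/ (a * INR n) ^ 2 * (7 * P * G * exp (6 * K))) by (field; lra).
    apply Rmult_le_compat_l; [left; apply Rinv_0_lt_compat, pow_lt; nra|].
    apply moment_le; assumption. }
  replace (14 * exp (6 * K) / a ^ 2 / INR r ^ 2 * P)
    with (7 * P * exp (6 * K) / a ^ 2 * (2 / INR r ^ 2)) by (field; lra).
  apply Rmult_le_compat_l.
  - apply Rmult_le_pos; [nra | left; apply Rinv_0_lt_compat, pow_lt; lra].
  - unfold G. rewrite !plus_INR, INR_1. apply growth_over_square_le; lra.
Qed.

Theorem mainTheorem15 :
  forall (a : R) (mu : nat -> R) (theta : R) (u : nuc),
    0 < a < 1 ->
    (forall n, 0 <= mu n <= 1) ->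
    0 <= theta ->
    Un_cv (fun n => INR n * mu n) theta ->
    exists c : R, 0 < c /\
      forall (r j n : nat),
        (2 <= r)%nat -> (j = 1 \/ j = 2)%nat -> (1 <= n)%nat ->
        0 < Prob (mu n) u (Nat.max n r) (xi_Xi u r j) ->
        condProb (mu n) u (Nat.max n r) (B_gt u n a) (xi_Xi u r j)
          <= condProb (mu n) u (Nat.max n r) (Bhat_gt u n a) (xi_Xi u r j)
        /\
        condProb (mu n) u (Nat.max n r) (Bhat_gt u n a) (xi_Xi u r j)
          <= c / (INR r ^ 2).
Proof.
  intros a mu theta u Ha Hmu _ Hcv.
  destruct (maj_by_pos _ (exist _ theta Hcv)) as [K [_ HK]].
  set (c := 14 * exp (6 * K) / a ^ 2).
  assert (Hc : 0 < c)
    by (apply Rdiv_lt_0_compat; [pose proof (exp_pos (6 * K)) | apply pow_lt]; lra).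
  exists c. split; [exact Hc|].
  intros r j n Hr Hj Hn HF. unfold condProb.
  assert (Hstable : Prob (mu n) u (Nat.max n r) (xi_Xi u r j) = Prob (mu n) u r (xi_Xi u r j)).
  { replace (Nat.max n r) with (r + (Nat.max n r - r))%nat by lia.
    apply Prob_xi_Xi_stable; [apply Hmu | lia]. }
  split.
  - apply Rmult_le_compat_r; [left; apply Rinv_0_lt_compat, HF|].
    apply Prob_B_gt_le_Bhat_gt; [apply Hmu | exact Hn].
  - apply Rdiv_le_of_le_mult; [exact HF|]. rewrite Hstable.
    destruct (Nat.le_gt_cases r n) as [Hrn | Hnr].
    + replace (Nat.max n r) with n by lia.
      apply Prob_Bhat_gt_xi_le; [apply Hmu | lra | lia | destruct Hj; lia | exact Hrn |].
      eapply Rle_trans; [apply Rle_abs | apply HK].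
    + replace (Nat.max n r) with r by lia.
      rewrite Prob_Bhat_gt_before_xi by (apply Hmu || lra || lia).
      rewrite <- Hstable. apply Rmult_le_pos; [|lra].
      apply Rlt_le, Rdiv_lt_0_compat, pow_lt, lt_0_INR; [exact Hc | lia].
Qed.
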